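(* Let $M$ be a multigraph with $n$ vertices. Then $M$ is the double competition multigraph of a reflexive digraph if and only if there exist an ordering $(v_1,\ldots,v_n)$ of the vertices of $M$ and a double indexed edge clique partition $\{S_{ij}\mid i,j\in[n]\}$ of $M$ such that the following conditions hold: (I) for any $i,j\in[n]$, if $|A_i\cap B_j|\ge 2$, then $A_i\cap B_j=S_{ij}$; (III) for any $i\in[n]$, $v_i\in S_{i*}\cup S_{*i}$, where $A_i = S_{i*}\cup T^+_i$, $S_{i*} := \bigcup_{p\in[n]} S_{ip}$, $T^+_i := \{v_b \mid a,b\in[n],\ v_i\in S_{ab}\}$, and $B_j = S_{*j}\cup T^-_j$, $S_{*j} := \bigcup_{q\in[n]} S_{qj}$, $T^-_j := \{v_a \mid a,b\in[n],\ v_j\in S_{ab}\}$.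
   Context: A digraph $D$ is a pair $(V(D),A(D))$ with $A(D)$ a set of ordered pairs of vertices (arcs); an arc $(v,v)$ is a loop, and $D$ is reflexive if $(v,v)\in A(D)$ for every $v\in V(D)$. $N^+_D(x)=\{v\mid (x,v)\in A(D)\}$ and $N^-_D(x)=\{v\mid (v,x)\in A(D)\}$. A multigraph $M$ (without loops) is a vertex set $V(M)$ together with a function $m_M$ assigning to each unordered pair $\{x,y\}$ of distinct vertices a nonnegative integer, the number of edges between $x$ and $y$. The double competition multigraph of a digraph $D$ is the multigraph $M$ with $V(M)=V(D)$ and $m_M(\{x,y\}) = |N^+_D(x)\cap N^+_D(y)|\cdot|N^-_D(x)\cap N^-_D(y)|$ for distinct $x,y$. A clique of $M$ is a set of vertices that are pairwise adjacent (i.e. $m_M\ge 1$ on every pair of distinct elements); the empty set and singletons count as cliques. An edge clique partition of $M$ is a family (multiset) $\mathcal{F}$ of cliques of $M$ such that any two distinct vertices $x,y$ are contained in exactly $m_M(\{x,y\})$ members of $\mathcal{F}$; a double indexed edge clique partition $\{S_{ij}\mid i,j\in[n]\}$ is such a family indexed by pairs $(i,j)\in[n]\times[n]$ (members may be empty). $[n]=\{1,\ldots,n\}$. *)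

From mathcomp Require Import all_boot.
Set Implicit Arguments. Unset Strict Implicit. Unset Printing Implicit Defensive.

Definition outN (V : finType) (D : rel V) (x : V) : {set V} := [set y | D x y].
Definition inN (V : finType) (D : rel V) (x : V) : {set V} := [set y | D y x].

Definition reflexive_digraph (V : finType) (D : rel V) : Prop := forall v, D v v.

(* A multigraph on V is given by m : V -> V -> nat, where m x y (x != y) is the
   number of edges between x and y; it is required to be symmetric, and the
   diagonal values are irrelevant (there are no loops). *)
Definition double_competition_multigraph (V : finType) (D : rel V)
  (m : V -> V -> nat) : Prop :=
  forall x y, x != y ->
    m x y = #|outN D x :&: outN D y| * #|inN D x :&: inN D y|.

Definition is_dcm_of_reflexive_digraph (V : finType) (m : V -> V -> nat) : Prop :=
  exists D : rel V, reflexive_digraph D /\ double_competition_multigraph D m.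

Definition is_clique (V : finType) (m : V -> V -> nat) (C : {set V}) : Prop :=
  forall x y, x \in C -> y \in C -> x != y -> 1 <= m x y.

Definition double_indexed_ecp (V : finType) (m : V -> V -> nat) (n : nat)
  (S : 'I_n -> 'I_n -> {set V}) : Prop :=
  (forall i j, is_clique m (S i j)) /\
  (forall x y, x != y ->
     #|[set ij : 'I_n * 'I_n | (x \in S ij.1 ij.2) && (y \in S ij.1 ij.2)]| = m x y).

Section Sets.
Variables (V : finType) (n : nat) (v : 'I_n -> V) (S : 'I_n -> 'I_n -> {set V}).
Definition Srow (i : 'I_n) : {set V} := \bigcup_(p < n) S i p.
Definition Scol (j : 'I_n) : {set V} := \bigcup_(q < n) S q j.
Definition Tplus (i : 'I_n) : {set V} :=
  [set v b | b in [set b : 'I_n | [exists a : 'I_n, v i \in S a b]]].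
Definition Tminus (j : 'I_n) : {set V} :=
  [set v a | a in [set a : 'I_n | [exists b : 'I_n, v j \in S a b]]].
Definition Aset (i : 'I_n) : {set V} := Srow i :|: Tplus i.
Definition Bset (j : 'I_n) : {set V} := Scol j :|: Tminus j.
End Sets.

From mathcomp Require Import all_boot.

Set Implicit Arguments. Unset Strict Implicit. Unset Printing Implicit Defensive.

(* Forward: for D reflexive, take S_ij := N+(v_i) ∩ N-(v_j); then A_i = N+(v_i)
   and B_j = N-(v_j).  Backward: put an arc from v_i to every vertex of A_i;
   then N+(v_i) = A_i and, since v_j ∈ A_i iff v_i ∈ B_j, also N-(v_j) = B_j.
   In both directions two distinct vertices x, y lie in S_ab exactly when
   v_a ∈ N-(x) ∩ N-(y) and v_b ∈ N+(x) ∩ N+(y) (backwards, this is where (I)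
   is used), so counting the pairs (a, b) gives the double competition
   multiplicity. *)

Lemma card_pairs_preimset (I V : finType) (v : I -> V) (A B : {set V}) :
  bijective v ->
  #|[set ij : I * I | (v ij.1 \in A) && (v ij.2 \in B)]| = #|A| * #|B|.
Proof.
move=> bv.
rewrite -(on_card_preimset (onW_bij A bv)) -(on_card_preimset (onW_bij B bv)) -cardsX.
by apply: eq_card => -[a b]; rewrite !inE.
Qed.

Lemma count_ecp_clique (V : finType) (m : V -> V -> nat) (n : nat)
    (S : 'I_n -> 'I_n -> {set V}) :
  (forall x y, x != y ->
     #|[set ij : 'I_n * 'I_n | (x \in S ij.1 ij.2) && (y \in S ij.1 ij.2)]| = m x y) ->
  double_indexed_ecp m S.
Proof.
move=> Scount; split=> // i j x y xS yS xy; rewrite -Scount //.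
by apply/card_gt0P; exists (i, j); rewrite inE xS yS.
Qed.

Lemma card_common_cells (V : finType) (D : rel V) (n : nat) (v : 'I_n -> V)
    (S : 'I_n -> 'I_n -> {set V}) (x y : V) :
  bijective v ->
  (forall a b, (x \in S a b) && (y \in S a b) =
     (v a \in inN D x :&: inN D y) && (v b \in outN D x :&: outN D y)) ->
  #|[set ij : 'I_n * 'I_n | (x \in S ij.1 ij.2) && (y \in S ij.1 ij.2)]| =
  #|outN D x :&: outN D y| * #|inN D x :&: inN D y|.
Proof.
move=> bv memS; rewrite mulnC -(card_pairs_preimset _ _ bv).
by apply: eq_card => -[a b]; rewrite inE /= memS [in RHS]inE.
Qed.

Section AsetBset.
Variables (V : finType) (n : nat) (v : 'I_n -> V) (S : 'I_n -> 'I_n -> {set V}).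

Lemma mem_Srow i x : (x \in Srow S i) = [exists p, x \in S i p].
Proof. by apply/bigcupP/existsP => [[p _ xS]|[p xS]]; exists p. Qed.

Lemma mem_Scol j x : (x \in Scol S j) = [exists q, x \in S q j].
Proof. by apply/bigcupP/existsP => [[q _ xS]|[q xS]]; exists q. Qed.

Lemma mem_Aset_S a b x : x \in S a b -> x \in Aset v S a.
Proof. by move=> xS; rewrite inE mem_Srow; apply/orP; left; apply/existsP; exists b. Qed.

Lemma mem_Bset_S a b x : x \in S a b -> x \in Bset v S b.
Proof. by move=> xS; rewrite inE mem_Scol; apply/orP; left; apply/existsP; exists a. Qed.

Hypothesis v_inj : injective v.

Lemma mem_Tplus i j : (v j \in Tplus v S i) = [exists a, v i \in S a j].
Proof.
apply/imsetP/existsP => [[b]|[a vS]].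
- by rewrite inE => /existsP [a vS] /v_inj ->; exists a.
- by exists j => //; rewrite inE; apply/existsP; exists a.
Qed.

Lemma mem_Tminus i j : (v i \in Tminus v S j) = [exists b, v j \in S i b].
Proof.
apply/imsetP/existsP => [[a]|[b vS]].
- by rewrite inE => /existsP [b vS] /v_inj ->; exists b.
- by exists i => //; rewrite inE; apply/existsP; exists b.
Qed.

Lemma mem_Aset_Bset i j : (v j \in Aset v S i) = (v i \in Bset v S j).
Proof. by rewrite !inE mem_Srow mem_Scol mem_Tplus mem_Tminus orbC. Qed.

Lemma mem_Aset_diag i : v i \in Srow S i :|: Scol S i -> v i \in Aset v S i.
Proof.
rewrite !inE mem_Tplus => /orP [->//|]; rewrite mem_Scol => ->.
by rewrite orbT.
Qed.

Lemma mem2_S_AsetIBset a b x y :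
  (2 <= #|Aset v S a :&: Bset v S b| -> Aset v S a :&: Bset v S b = S a b) ->
  x != y ->
  (x \in S a b) && (y \in S a b) =
  (x \in Aset v S a :&: Bset v S b) && (y \in Aset v S a :&: Bset v S b).
Proof.
move=> condI xy; apply/andP/andP => [[xS yS]|[xAB yAB]].
  by rewrite !in_setI (mem_Aset_S xS) (mem_Aset_S yS) (mem_Bset_S xS) (mem_Bset_S yS).
have two_in : 2 <= #|Aset v S a :&: Bset v S b|.
  apply: leq_trans (subset_leq_card (A := [set x; y]) _); first by rewrite cards2 xy.
  by apply/subsetP => z /set2P [] ->.
by rewrite -condI.
Qed.

End AsetBset.

Section ReflexiveCells.
Variables (V : finType) (D : rel V) (n : nat) (v : 'I_n -> V).
Hypotheses (D_refl : reflexive_digraph D) (bv : bijective v).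

Definition dcm_cells (i j : 'I_n) : {set V} := outN D (v i) :&: inN D (v j).

Lemma mem_dcm_cells_diag i : v i \in dcm_cells i i.
Proof. by rewrite !inE D_refl. Qed.

Lemma Aset_dcm_cells i : Aset v dcm_cells i = outN D (v i).
Proof.
case: bv => w vK wK; apply/setP => x; apply/idP/idP => [|Dix].
  rewrite !inE mem_Srow => /orP [/existsP [p]|/imsetP [b]].
    by rewrite !inE => /andP [].
  by rewrite inE => /existsP [a] /[!inE] /andP [_ ?] ->.
by rewrite (mem_Aset_S v (b := w x)) // !inE wK D_refl andbT; rewrite inE in Dix.
Qed.

Lemma Bset_dcm_cells j : Bset v dcm_cells j = inN D (v j).
Proof.
case: bv => w vK wK; apply/setP => x; apply/idP/idP => [|Djx].
  rewrite !inE mem_Scol => /orP [/existsP [q]|/imsetP [a]].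
    by rewrite !inE => /andP [].
  by rewrite inE => /existsP [b] /[!inE] /andP [? _] ->.
by rewrite (mem_Bset_S v (a := w x)) // !inE wK D_refl; rewrite inE in Djx.
Qed.

End ReflexiveCells.

Theorem theorem3 (V : finType) (n : nat) (m : V -> V -> nat)
  (hn : #|V| = n) (msym : forall x y, m x y = m y x) :
  is_dcm_of_reflexive_digraph m <->
  exists (v : 'I_n -> V) (S : 'I_n -> 'I_n -> {set V}),
    [/\ bijective v,
        double_indexed_ecp m S,
        (forall i j : 'I_n, 2 <= #|Aset v S i :&: Bset v S j| ->
            Aset v S i :&: Bset v S j = S i j) &
        (forall i : 'I_n, v i \in Srow S i :|: Scol S i)].
Proof.
split=> [[D [Drefl Dm]]|[v [S [bv Secp condI condIII]]]].
- subst n; pose v : 'I_#|V| -> V := enum_val.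
  have bv : bijective v by exact: Bijective enum_valK enum_rankK.
  exists v, (dcm_cells D v); split=> // [|i j _|i].
  + apply: count_ecp_clique => x y xy; rewrite Dm //.
    apply: card_common_cells bv _ => a b; rewrite !inE -!andbA.
    by case: (D (v a) x) (D (v a) y) (D x (v b)) (D y (v b)) => [] [] [] [].
  + by rewrite Aset_dcm_cells // Bset_dcm_cells.
  + by rewrite inE mem_Srow; apply/orP; left; apply/existsP; exists i;
      apply: mem_dcm_cells_diag.
- have v_inj := bij_inj bv; case: (bv) => w vK wK.
  pose D : rel V := fun x y => y \in Aset v S (w x).
  have DvE i x : D (v i) x = (x \in Aset v S i) by rewrite /D vK.
  have DEv x j : D x (v j) = (x \in Bset v S j).
    by rewrite /D -[in RHS](wK x) -(mem_Aset_Bset _ v_inj).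
  exists D; split.
    by move=> x; rewrite -(wK x) DvE mem_Aset_diag.
  move=> x y xy; rewrite -Secp.2 //; apply: card_common_cells bv _ => a b.
  rewrite (mem2_S_AsetIBset (condI a b) xy) !in_setI -!DvE -!DEv !inE.
  by case: (D (v a) x) (D (v a) y) (D x (v b)) (D y (v b)) => [] [] [] [].
Qed.
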